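(* Let $\Gamma$ be a discrete subgroup of $E(n)$, and let $A=\lambda A'$, where $A'\in O(n)$ and $\lambda>0$. Suppose that $A\Gamma A^{-1}\subset\Gamma$. Then $A\Gamma A^{-1}$ is a subgroup of finite index in $\Gamma$.
   Context: $E(n)$ denotes the group of isometries of $\mathbb{R}^n$ (maps $x\mapsto Bx+b$, $B\in O(n)$, $b\in\mathbb{R}^n$) with the topology of $O(n)\times\mathbb{R}^n$; discreteness refers to this topology. $A\Gamma A^{-1}=\{A\circ\gamma\circ A^{-1}:\gamma\in\Gamma\}$. *)

From Stdlib Require Import Reals Lra Lia List Arith.
Open Scope R_scope.

Definition Ix (n : nat) := {i : nat | (i < n)%nat}.
Definition vec (n : nat) := Ix n -> R.
Definition mat (n : nat) := Ix n -> Ix n -> R.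

Fixpoint sum_upto (g : nat -> R) (m : nat) : R :=
  match m with
  | O => 0
  | S m' => sum_upto g m' + g m'
  end.

Definition sumI (n : nat) (f : Ix n -> R) : R :=
  sum_upto (fun k => match lt_dec k n with
                     | left H => f (exist _ k H)
                     | right _ => 0
                     end) n.

Definition kron (n : nat) (i j : Ix n) : R :=
  if Nat.eq_dec (proj1_sig i) (proj1_sig j) then 1 else 0.

Definition mv (n : nat) (M : mat n) (x : vec n) : vec n :=
  fun i => sumI n (fun k => M i k * x k).

Definition transpose (n : nat) (M : mat n) : mat n := fun i j => M j i.

Definition orthogonal (n : nat) (M : mat n) : Prop :=
  forall i j, sumI n (fun k => M k i * M k j) = kron n i j.

Definition is_isometry (n : nat) (f : vec n -> vec n) : Prop :=
  exists (B : mat n) (b : vec n),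
    orthogonal n B /\ f = (fun x => fun i => mv n B x i + b i).

Definition subgroup_E (n : nat) (G : (vec n -> vec n) -> Prop) : Prop :=
  (forall f, G f -> is_isometry n f) /\
  G (fun x => x) /\
  (forall f g, G f -> G g -> G (fun x => f (g x))) /\
  (forall f, G f -> exists g, G g /\ (forall x, g (f x) = x) /\ (forall x, f (g x) = x)).

Definition subgroup_of (n : nat) (H G : (vec n -> vec n) -> Prop) : Prop :=
  subgroup_E n H /\ (forall h, H h -> G h).

(* Coordinates (B, b) of an affine map f : b = f 0, column j of B = f e_j - f 0.
   These identify E(n) with O(n) x R^n. *)
Definition zerov (n : nat) : vec n := fun _ => 0.
Definition ev (n : nat) (j : Ix n) : vec n := fun i => kron n i j.
Definition transl (n : nat) (f : vec n -> vec n) : vec n := f (zerov n).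
Definition linpart (n : nat) (f : vec n -> vec n) : mat n :=
  fun i j => f (ev n j) i - f (zerov n) i.

(* Discreteness in the topology of O(n) x R^n (product of the Euclidean
   topologies; the sup-distance on entries gives the same topology). *)
Definition discrete (n : nat) (G : (vec n -> vec n) -> Prop) : Prop :=
  forall g, G g -> exists eps : R, 0 < eps /\
    forall h, G h ->
      (forall i, Rabs (transl n h i - transl n g i) < eps) ->
      (forall i j, Rabs (linpart n h i j - linpart n g i j) < eps) ->
      h = g.

Definition simil (n : nat) (lam : R) (A' : mat n) : vec n -> vec n :=
  fun x => fun i => lam * mv n A' x i.
Definition simil_inv (n : nat) (lam : R) (A' : mat n) : vec n -> vec n :=
  fun x => fun i => / lam * mv n (transpose n A') x i.

Definition conj_set (n : nat) (A Ainv : vec n -> vec n)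
  (G : (vec n -> vec n) -> Prop) : (vec n -> vec n) -> Prop :=
  fun h => exists g, G g /\ h = (fun x => A (g (Ainv x))).

Definition finite_index (n : nat) (H G : (vec n -> vec n) -> Prop) : Prop :=
  exists l : list (vec n -> vec n),
    (forall r, In r l -> G r) /\
    forall g, G g -> exists r h, In r l /\ H h /\ g = (fun x => r (h x)).

From Stdlib Require Import Reals List Lra Lia ZArith.
From Stdlib Require Import FunctionalExtensionality ProofIrrelevance Classical.
Open Scope R_scope.

(* Let phi(g) = A g A^-1.  If phi(Gamma) had m distinct left cosets r_1, ..., r_m
   in Gamma, the words r_(i_1) phi(r_(i_2) phi(... phi(r_(i_j)))) would be m^j
   distinct elements of Gamma, while all their coordinates are bounded by
   O(a^j) with a = n^2 lam + 1.  Discreteness makes Gamma uniformly discrete, so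
   the number of elements of Gamma with coordinates bounded by R is O(R^K),
   K = n^2 + n.  Hence m^j = O(a^(jK)) for all j, i.e. m <= 2 a^K. *)

Lemma sum_upto_ext g h m :
  (forall k, (k < m)%nat -> g k = h k) -> sum_upto g m = sum_upto h m.
Proof.
  induction m; intros Hgh; simpl; auto.
  rewrite IHm by (intros; apply Hgh; lia).
  rewrite Hgh by lia; reflexivity.
Qed.

Lemma sum_upto_add g h m :
  sum_upto (fun k => g k + h k) m = sum_upto g m + sum_upto h m.
Proof. induction m; simpl; [lra | rewrite IHm; lra]. Qed.

Lemma sum_upto_scal c g m : sum_upto (fun k => c * g k) m = c * sum_upto g m.
Proof. induction m; simpl; [lra | rewrite IHm; lra]. Qed.

Lemma sum_upto_const c m : sum_upto (fun _ => c) m = INR m * c.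
Proof. induction m; simpl sum_upto; [simpl; lra | rewrite IHm, S_INR; lra]. Qed.

Lemma sum_upto_le g h m : (forall k, g k <= h k) -> sum_upto g m <= sum_upto h m.
Proof. intros Hgh; induction m; simpl; [lra | specialize (Hgh m); lra]. Qed.

Lemma sum_upto_abs g m : Rabs (sum_upto g m) <= sum_upto (fun k => Rabs (g k)) m.
Proof.
  induction m; simpl; [rewrite Rabs_R0; lra |].
  eapply Rle_trans; [apply Rabs_triang | lra].
Qed.

Lemma sum_upto_nonneg g m : (forall k, 0 <= g k) -> 0 <= sum_upto g m.
Proof. intros Hg; induction m; simpl; [lra | specialize (Hg m); lra]. Qed.

Lemma sum_upto_term g m k :
  (forall j, 0 <= g j) -> (k < m)%nat -> g k <= sum_upto g m.
Proof.
  intros Hg; induction m; intros Hk; [lia | simpl].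
  destruct (Nat.eq_dec k m) as [-> | Hne].
  - pose proof (sum_upto_nonneg g m Hg); lra.
  - pose proof (IHm ltac:(lia)); specialize (Hg m); lra.
Qed.

Lemma sum_upto_single g m k0 :
  (k0 < m)%nat -> (forall k, k <> k0 -> g k = 0) -> sum_upto g m = g k0.
Proof.
  induction m; intros Hk0 Hg; [lia | simpl].
  destruct (Nat.eq_dec k0 m) as [-> | Hne].
  - rewrite (sum_upto_ext g (fun _ => 0)) by (intros; apply Hg; lia).
    rewrite sum_upto_const; lra.
  - rewrite IHm, (Hg m) by (auto; lia); lra.
Qed.

Lemma sum_upto_swap (f : nat -> nat -> R) a b :
  sum_upto (fun i => sum_upto (fun j => f i j) b) a
  = sum_upto (fun j => sum_upto (fun i => f i j) a) b.
Proof.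
  induction a; simpl.
  - rewrite (sum_upto_const 0); lra.
  - rewrite IHa, <- sum_upto_add; reflexivity.
Qed.

Definition ix_extend (n : nat) (f : Ix n -> R) (k : nat) : R :=
  match lt_dec k n with left H => f (exist _ k H) | right _ => 0 end.

Lemma sumI_extend n f : sumI n f = sum_upto (ix_extend n f) n.
Proof. reflexivity. Qed.

Lemma ix_extend_at n f (i : Ix n) : ix_extend n f (proj1_sig i) = f i.
Proof.
  destruct i as [k Hk]; unfold ix_extend; simpl.
  destruct (lt_dec k n); [| contradiction].
  do 2 f_equal; apply proof_irrelevance.
Qed.

Lemma sumI_ext n f g : (forall i, f i = g i) -> sumI n f = sumI n g.
Proof.
  intros Hfg; apply sum_upto_ext; intros k _; unfold ix_extend.
  destruct (lt_dec k n); auto.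
Qed.

Lemma sumI_add n f g : sumI n (fun i => f i + g i) = sumI n f + sumI n g.
Proof.
  unfold sumI; rewrite <- sum_upto_add.
  apply sum_upto_ext; intros k _; destruct (lt_dec k n); lra.
Qed.

Lemma sumI_scal n c f : sumI n (fun i => c * f i) = c * sumI n f.
Proof.
  unfold sumI; rewrite <- sum_upto_scal.
  apply sum_upto_ext; intros k _; destruct (lt_dec k n); lra.
Qed.

Lemma sumI_sub n f g : sumI n (fun i => f i - g i) = sumI n f - sumI n g.
Proof.
  replace (sumI n f - sumI n g) with (sumI n f + (-1) * sumI n g) by ring.
  rewrite <- sumI_scal, <- sumI_add; apply sumI_ext; intros; ring.
Qed.

Lemma sumI_const n c : sumI n (fun _ => c) = INR n * c.
Proof.
  unfold sumI; rewrite <- sum_upto_const.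
  apply sum_upto_ext; intros k Hk; destruct (lt_dec k n); [reflexivity | lia].
Qed.

Lemma sumI_le n f g : (forall i, f i <= g i) -> sumI n f <= sumI n g.
Proof.
  intros Hfg; apply sum_upto_le; intros k; unfold ix_extend.
  destruct (lt_dec k n); [auto | lra].
Qed.

Lemma sumI_abs n f : Rabs (sumI n f) <= sumI n (fun i => Rabs (f i)).
Proof.
  eapply Rle_trans; [apply sum_upto_abs |].
  apply sum_upto_le; intros k; unfold ix_extend.
  destruct (lt_dec k n); [lra | rewrite Rabs_R0; lra].
Qed.

Lemma sumI_nonneg n f : (forall i, 0 <= f i) -> 0 <= sumI n f.
Proof.
  intros Hf; apply sum_upto_nonneg; intros k; unfold ix_extend.
  destruct (lt_dec k n); [auto | lra].
Qed.

Lemma sumI_term n f i : (forall i, 0 <= f i) -> f i <= sumI n f.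
Proof.
  intros Hf; rewrite sumI_extend, <- ix_extend_at.
  apply sum_upto_term.
  - intros j; unfold ix_extend; destruct (lt_dec j n); [auto | lra].
  - exact (proj2_sig i).
Qed.

Lemma sumI_le_const n f d : (forall i, f i <= d) -> sumI n f <= INR n * d.
Proof. intros Hf; rewrite <- sumI_const; apply sumI_le, Hf. Qed.

Lemma sumI_kron n (i : Ix n) x : sumI n (fun l => kron n i l * x l) = x i.
Proof.
  rewrite sumI_extend, (sum_upto_single _ _ (proj1_sig i)).
  - rewrite ix_extend_at; unfold kron.
    destruct (Nat.eq_dec _ _); [lra | congruence].
  - exact (proj2_sig i).
  - intros k Hk; unfold ix_extend, kron.
    destruct (lt_dec k n); simpl; [destruct (Nat.eq_dec _ _); [congruence | lra] | reflexivity].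
Qed.

Lemma sumI_swap n (f : Ix n -> Ix n -> R) :
  sumI n (fun i => sumI n (fun j => f i j)) = sumI n (fun j => sumI n (fun i => f i j)).
Proof.
  set (F := fun a b => ix_extend n (fun i => ix_extend n (f i) b) a).
  transitivity (sum_upto (fun a => sum_upto (fun b => F a b) n) n).
  - apply sum_upto_ext; intros a _; unfold F, ix_extend.
    destruct (lt_dec a n); [reflexivity |].
    rewrite sum_upto_const; lra.
  - rewrite sum_upto_swap; apply sum_upto_ext; intros b _; unfold F, ix_extend.
    destruct (lt_dec b n).
    + apply sum_upto_ext; intros a _; destruct (lt_dec a n); reflexivity.
    + rewrite (sum_upto_ext _ (fun _ => 0)) by (intros a _; destruct (lt_dec a n); reflexivity).
      rewrite sum_upto_const; lra.
Qed.

Lemma orthogonal_entry_le1 n B i j : orthogonal n B -> Rabs (B i j) <= 1.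
Proof.
  intros HB; pose proof (HB j j) as Hjj; unfold kron in Hjj.
  destruct (Nat.eq_dec _ _); [| congruence].
  assert (B i j * B i j <= 1).
  { rewrite <- Hjj; apply (sumI_term n (fun k => B k j * B k j)); intros; nra. }
  unfold Rabs; destruct (Rcase_abs _); nra.
Qed.

Lemma mv_transpose_orthogonal n B x i :
  orthogonal n B -> mv n (transpose n B) (mv n B x) i = x i.
Proof.
  intros HB; unfold mv, transpose.
  transitivity (sumI n (fun k => sumI n (fun l => B k i * B k l * x l))).
  { apply sumI_ext; intros k; rewrite <- sumI_scal; apply sumI_ext; intros; ring. }
  rewrite sumI_swap, <- (sumI_kron n i x).
  apply sumI_ext; intros l; rewrite <- HB, (Rmult_comm (sumI _ _)), <- sumI_scal.
  apply sumI_ext; intros; ring.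
Qed.

Lemma mv_zerov n M i : mv n M (zerov n) i = 0.
Proof.
  unfold mv, zerov; rewrite (sumI_ext _ _ (fun _ => 0)) by (intros; ring).
  rewrite sumI_const; ring.
Qed.

Lemma orthogonal_mv_bound n B x d i :
  orthogonal n B -> (forall k, Rabs (x k) <= d) -> Rabs (mv n B x i) <= INR n * d.
Proof.
  intros HB Hx; eapply Rle_trans; [apply sumI_abs |].
  apply sumI_le_const; intros k; rewrite Rabs_mult.
  pose proof (orthogonal_entry_le1 n B i k HB); pose proof (Rabs_pos (x k)).
  specialize (Hx k); nra.
Qed.

Lemma isometry_coord_lipschitz n f y z i : is_isometry n f ->
  Rabs (f y i - f z i) <= sumI n (fun l => Rabs (y l - z l)).
Proof.
  intros [B [b [HB ->]]]; cbv beta.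
  replace (mv n B y i + b i - (mv n B z i + b i)) with (sumI n (fun l => B i l * (y l - z l))).
  - eapply Rle_trans; [apply sumI_abs |]; apply sumI_le; intros l; rewrite Rabs_mult.
    pose proof (orthogonal_entry_le1 n B i l HB); pose proof (Rabs_pos (y l - z l)); nra.
  - unfold mv; rewrite (sumI_ext _ _ (fun l => B i l * y l - B i l * z l)) by (intros; ring).
    rewrite sumI_sub; ring.
Qed.

Fixpoint sumL {A} (f : A -> R) (l : list A) : R :=
  match l with nil => 0 | x :: l' => f x + sumL f l' end.

Lemma sumL_ext {A} (f g : A -> R) l : (forall x, f x = g x) -> sumL f l = sumL g l.
Proof. intros Hfg; induction l; simpl; [reflexivity | rewrite IHl, Hfg; reflexivity]. Qed.

Lemma sumL_add {A} (f g : A -> R) l : sumL (fun x => f x + g x) l = sumL f l + sumL g l.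
Proof. induction l; simpl; [lra | rewrite IHl; lra]. Qed.

Lemma sumL_nonneg {A} (f : A -> R) l : (forall x, 0 <= f x) -> 0 <= sumL f l.
Proof. intros Hf; induction l; simpl; [lra | specialize (Hf a); lra]. Qed.

Lemma sumL_term {A} (f : A -> R) l t : (forall x, 0 <= f x) -> In t l -> f t <= sumL f l.
Proof.
  intros Hf; induction l as [| x l IH]; simpl; [tauto |]; intros [-> | Ht].
  - pose proof (sumL_nonneg f l Hf); lra.
  - specialize (IH Ht); specialize (Hf x); lra.
Qed.

Lemma sumL_le_const {A} (f : A -> R) l d :
  (forall x, In x l -> f x <= d) -> sumL f l <= INR (length l) * d.
Proof.
  induction l as [| x l IH]; intros Hf; simpl length; simpl sumL; [simpl; lra |].
  rewrite S_INR.
  assert (f x <= d) by (apply Hf; left; reflexivity).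
  assert (sumL f l <= INR (length l) * d) by (apply IH; intros; apply Hf; right; assumption).
  lra.
Qed.

Lemma up_le x y : x <= y -> (up x <= up y)%Z.
Proof.
  intros Hxy; destruct (archimed x), (archimed y).
  assert (Hlt : IZR (up x - 1) < IZR (up y)) by (rewrite minus_IZR; simpl; lra).
  apply lt_IZR in Hlt; lia.
Qed.

Lemma up_eq_dist_lt1 x y : up x = up y -> Rabs (x - y) < 1.
Proof.
  intros Hxy; destruct (archimed x), (archimed y); rewrite Hxy in *.
  unfold Rabs; destruct (Rcase_abs _); lra.
Qed.

Lemma NoDup_pairwise_eq_length_le1 {T} (L : list T) :
  NoDup L -> (forall x y, In x L -> In y L -> x = y) -> (length L <= 1)%nat.
Proof.
  intros HL Heq; destruct L as [| x [| y L]]; simpl; try lia.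
  inversion HL as [| ? ? Hx]; subst; exfalso; apply Hx.
  rewrite (Heq x y) by (simpl; auto); simpl; auto.
Qed.

Lemma length_le_sum_fibres {T} (b : T -> Z) ts (L : list T) :
  (forall x, In x L -> In (b x) ts) ->
  INR (length L) <= sumL (fun t => INR (length (filter (fun x => Z.eqb (b x) t) L))) ts.
Proof.
  induction L as [| x L IH]; intros Hb; [simpl; apply sumL_nonneg; intros; lra |].
  rewrite (sumL_ext _ (fun t => INR (length (filter (fun y => Z.eqb (b y) t) L))
                                + (if Z.eqb (b x) t then 1 else 0))).
  - rewrite sumL_add; simpl length; rewrite S_INR.
    assert (1 <= sumL (fun t => if Z.eqb (b x) t then 1 else 0) ts).
    { replace 1 with (if Z.eqb (b x) (b x) then 1 else 0) at 1 by (rewrite Z.eqb_refl; reflexivity).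
      apply (sumL_term (fun t => if Z.eqb (b x) t then 1 else 0)).
      - intros; destruct (Z.eqb _ _); lra.
      - apply Hb; left; reflexivity. }
    assert (IH' := IH ltac:(intros; apply Hb; right; assumption)); lra.
  - intros t; simpl; destruct (Z.eqb (b x) t); simpl length; [rewrite S_INR |]; lra.
Qed.

(* Pigeonhole on a grid of mesh [d]: the cell index [up (c x / d)] of the first
   coordinate takes at most [2 Rb / d + 3] values, and points in one cell are
   separated by one of the remaining coordinates. *)
Lemma separated_list_length_le {T} (cs : list (T -> R)) (d Rb : R) (L : list T) :
  0 < d -> 0 <= Rb -> NoDup L ->
  (forall x c, In x L -> In c cs -> Rabs (c x) <= Rb) ->
  (forall x y, In x L -> In y L -> x <> y -> exists c, In c cs /\ d <= Rabs (c x - c y)) ->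
  INR (length L) <= (2 * Rb / d + 3) ^ length cs.
Proof.
  intros Hd HRb; pose proof (Rinv_0_lt_compat d Hd) as Hid.
  assert (Hbase : 0 <= 2 * Rb / d + 3) by (unfold Rdiv; nra).
  revert L; induction cs as [| c cs IH]; intros L HL Hbnd Hsep.
  - simpl; apply (le_INR _ 1), NoDup_pairwise_eq_length_le1; auto.
    intros x y Hx Hy; apply NNPP; intros Hxy.
    destruct (Hsep x y Hx Hy Hxy) as [? [[] _]].
  - set (cell := fun x => up (c x / d)).
    set (lo := up (- Rb / d)); set (hi := up (Rb / d)).
    set (N := Z.to_nat (hi - lo + 1)).
    set (ts := map (fun k => (lo + Z.of_nat k)%Z) (seq 0 N)).
    assert (Hcell : forall x, In x L -> In (cell x) ts).
    { intros x Hx; assert (Hc := Hbnd x c Hx (or_introl eq_refl)).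
      assert (-Rb <= c x <= Rb) by (unfold Rabs in Hc; destruct (Rcase_abs _); lra).
      assert (lo <= cell x)%Z by (apply up_le; unfold Rdiv; nra).
      assert (cell x <= hi)%Z by (apply up_le; unfold Rdiv; nra).
      apply in_map_iff; exists (Z.to_nat (cell x - lo)); split; [lia |].
      apply in_seq; unfold N; lia. }
    eapply Rle_trans; [apply (length_le_sum_fibres cell ts L Hcell) |].
    eapply Rle_trans; [apply (sumL_le_const _ _ ((2 * Rb / d + 3) ^ length cs)) |].
    + intros t _; apply IH.
      * apply NoDup_filter; assumption.
      * intros x c' Hx Hc'; apply filter_In in Hx; apply Hbnd; simpl; tauto.
      * intros x y Hx Hy Hxy; apply filter_In in Hx as [Hx Ex], Hy as [Hy Ey].
        destruct (Hsep x y Hx Hy Hxy) as [c' [[<- | Hc'] Hd']]; [| eauto].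
        exfalso; cbv beta in Ex, Ey; apply Z.eqb_eq in Ex, Ey; unfold cell in Ex, Ey.
        assert (Hclose : Rabs (c x / d - c y / d) < 1) by (apply up_eq_dist_lt1; congruence).
        replace (c x / d - c y / d) with ((c x - c y) * / d) in Hclose by (field; lra).
        rewrite Rabs_mult, (Rabs_pos_eq (/ d)) in Hclose by lra.
        apply (Rmult_lt_compat_r d) in Hclose; [| assumption].
        rewrite Rmult_assoc, Rinv_l in Hclose by lra; lra.
    + simpl length; simpl pow; apply Rmult_le_compat_r; [apply pow_le; assumption |].
      assert (Hlohi : (lo <= hi)%Z) by (apply up_le; unfold Rdiv; nra).
      unfold ts; rewrite length_map, length_seq; unfold N.
      rewrite INR_IZR_INZ, Z2Nat.id by lia; rewrite plus_IZR, minus_IZR.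
      destruct (archimed (Rb / d)) as [Hhi Hhi'], (archimed (- Rb / d)) as [Hlo Hlo'].
      fold hi in Hhi, Hhi'; fold lo in Hlo, Hlo'; unfold Rdiv in *; lra.
Qed.

Definition ix_list (n : nat) : list (Ix n) :=
  flat_map (fun k => match lt_dec k n with left H => exist _ k H :: nil | right _ => nil end)
    (seq 0 n).

Lemma In_ix_list n (i : Ix n) : In i (ix_list n).
Proof.
  destruct i as [k Hk]; apply in_flat_map; exists k; split; [apply in_seq; lia |].
  destruct (lt_dec k n); [left; f_equal; apply proof_irrelevance | contradiction].
Qed.

(* An affine map is determined by these [n^2 + n] numbers: its values at [0]
   and at the basis vectors. *)
Definition coord_fns n : list ((vec n -> vec n) -> R) :=
  flat_map (fun p => map (fun i (f : vec n -> vec n) => f p i) (ix_list n))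
    (zerov n :: map (ev n) (ix_list n)).

Lemma coord_fns_zerov n i : In (fun f : vec n -> vec n => f (zerov n) i) (coord_fns n).
Proof.
  apply in_flat_map; exists (zerov n); split; [left; reflexivity |].
  apply in_map_iff; exists i; split; [reflexivity | apply In_ix_list].
Qed.

Lemma coord_fns_ev n j i : In (fun f : vec n -> vec n => f (ev n j) i) (coord_fns n).
Proof.
  apply in_flat_map; exists (ev n j); split.
  - right; apply in_map_iff; exists j; split; [reflexivity | apply In_ix_list].
  - apply in_map_iff; exists i; split; [reflexivity | apply In_ix_list].
Qed.

Lemma coord_fnsP n c : In c (coord_fns n) ->
  exists p i, (p = zerov n \/ exists j, p = ev n j) /\ c = fun f => f p i.
Proof.
  intros Hc; apply in_flat_map in Hc as [p [Hp Hc]]; apply in_map_iff in Hc as [i [<- _]].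
  exists p, i; split; [| reflexivity].
  destruct Hp as [<- | Hp]; [left; reflexivity |].
  apply in_map_iff in Hp as [j [<- _]]; right; exists j; reflexivity.
Qed.

(* Discreteness at the identity propagates to a uniform separation: if [g] and
   [h] are close, then [g^-1 h] is close to the identity, because [g^-1] is an
   isometry. *)
Lemma discrete_uniform n G : subgroup_E n G -> discrete n G -> exists d, 0 < d /\
  forall g h, G g -> G h ->
    (forall i, Rabs (g (zerov n) i - h (zerov n) i) < d) ->
    (forall j i, Rabs (g (ev n j) i - h (ev n j) i) < d) -> g = h.
Proof.
  intros [Hiso [Hid [Hmul Hinv]]] Hdisc.
  destruct (Hdisc _ Hid) as [eps [Heps Hnear]].
  pose proof (pos_INR n) as Hn.
  set (d := eps / (2 * INR n + 2)).
  assert (Hnd : INR n * d < eps / 2).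
  { unfold d; apply (Rmult_lt_reg_r (2 * INR n + 2)); [lra |]; field_simplify; lra. }
  exists d; split; [unfold d; apply Rdiv_lt_0_compat; lra |].
  intros g h Hg Hh Hzero He.
  destruct (Hinv g Hg) as [gi [Hgi [Hgig Hggi]]].
  assert (Hlip : forall p, (forall l, Rabs (g p l - h p l) < d) ->
            forall i, Rabs (gi (h p) i - gi (g p) i) <= INR n * d).
  { intros p Hp i; eapply Rle_trans; [apply isometry_coord_lipschitz, Hiso, Hgi |].
    apply sumI_le_const; intros l; rewrite Rabs_minus_sym; left; apply Hp. }
  assert (Hgih : (fun x => gi (h x)) = (fun x => x)).
  { apply Hnear; [apply Hmul; assumption | |].
    - intros i; unfold transl.
      replace (zerov n i) with (gi (g (zerov n)) i) by (rewrite Hgig; reflexivity).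
      eapply Rle_lt_trans; [apply Hlip, Hzero | lra].
    - intros i j; unfold linpart.
      replace (gi (h (ev n j)) i - gi (h (zerov n)) i - (ev n j i - zerov n i)) with
        ((gi (h (ev n j)) i - gi (g (ev n j)) i) - (gi (h (zerov n)) i - gi (g (zerov n)) i))
        by (rewrite !Hgig; ring).
      eapply Rle_lt_trans; [apply Rabs_triang |]; rewrite Rabs_Ropp.
      pose proof (Hlip _ (He j) i); pose proof (Hlip _ Hzero i); lra. }
  apply functional_extensionality; intros x.
  rewrite <- (Hggi (h x)); exact (eq_sym (f_equal g (equal_f Hgih x))).
Qed.

Lemma discrete_coord_separated n G : subgroup_E n G -> discrete n G -> exists d, 0 < d /\
  forall g h, G g -> G h -> g <> h -> exists c, In c (coord_fns n) /\ d <= Rabs (c g - c h).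
Proof.
  intros HG HD; destruct (discrete_uniform n G HG HD) as [d [Hd Hsep]].
  exists d; split; [assumption |].
  intros g h Hg Hh Hne; apply NNPP; intros Hno; apply Hne, Hsep; auto.
  - intros i; apply Rnot_le_lt; intros Hle; apply Hno.
    exists (fun f => f (zerov n) i); split; [apply coord_fns_zerov | assumption].
  - intros j i; apply Rnot_le_lt; intros Hle; apply Hno.
    exists (fun f => f (ev n j) i); split; [apply coord_fns_ev | assumption].
Qed.

Lemma coord_fns_bound n g Rb : is_isometry n g -> (forall i, Rabs (g (zerov n) i) <= Rb) ->
  forall c, In c (coord_fns n) -> Rabs (c g) <= Rb + INR n.
Proof.
  intros Hg Hb c Hc; destruct (coord_fnsP n c Hc) as [p [i [[-> | [j ->]] ->]]].
  - pose proof (Hb i); pose proof (pos_INR n); lra.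
  - pose proof (isometry_coord_lipschitz n g (ev n j) (zerov n) i Hg).
    assert (sumI n (fun l => Rabs (ev n j l - zerov n l)) <= INR n * 1).
    { apply sumI_le_const; intros l; unfold ev, zerov, kron.
      destruct (Nat.eq_dec _ _); rewrite Rminus_0_r; [rewrite Rabs_R1 | rewrite Rabs_R0]; lra. }
    pose proof (Hb i); cbv beta.
    replace (g (ev n j) i) with ((g (ev n j) i - g (zerov n) i) + g (zerov n) i) by ring.
    eapply Rle_trans; [apply Rabs_triang | lra].
Qed.

Fixpoint distinct_cosets {n} (H : (vec n -> vec n) -> Prop) (rs : list (vec n -> vec n)) : Prop :=
  match rs with
  | nil => True
  | r :: rs' =>
      (forall s, In s rs' -> ~ exists h, H h /\ r = (fun x => s (h x))) /\ distinct_cosets H rs'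
  end.

Lemma finite_index_of_distinct_cosets_bounded n (H G : (vec n -> vec n) -> Prop) :
  (exists M, forall rs, distinct_cosets H rs -> (forall r, In r rs -> G r) -> (length rs < M)%nat) ->
  finite_index n H G.
Proof.
  intros [M HM]; apply NNPP; intros Hinf.
  assert (Hext : forall rs, (forall r, In r rs -> G r) ->
            exists g, G g /\ forall s, In s rs -> ~ exists h, H h /\ g = (fun x => s (h x))).
  { intros rs HrsG; apply NNPP; intros Hcover; apply Hinf; exists rs; split; [assumption |].
    intros g Hg; apply NNPP; intros Hg'; apply Hcover; exists g; split; [assumption |].
    intros s Hs [h [Hh ->]]; apply Hg'; exists s, h; auto. }
  assert (Hall : forall k, exists rs,
            distinct_cosets H rs /\ (forall r, In r rs -> G r) /\ length rs = k).
  { induction k as [| k [rs [Hrs [HrsG Hlen]]]]; [exists nil; simpl; intuition |].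
    destruct (Hext rs HrsG) as [g [Hg Hnew]].
    exists (g :: rs); simpl; split; [auto | split; [intros r [<- | Hr]; auto | congruence]]. }
  destruct (Hall M) as [rs [Hrs [HrsG Hlen]]]; specialize (HM rs Hrs HrsG); lia.
Qed.

Lemma list_transl_bound n (rs : list (vec n -> vec n)) :
  exists C, 0 <= C /\ forall r, In r rs -> forall i, Rabs (r (zerov n) i) <= C.
Proof.
  set (nrm := fun r : vec n -> vec n => sumI n (fun l => Rabs (r (zerov n) l))).
  assert (Hnrm : forall r, 0 <= nrm r) by (intros; apply sumI_nonneg; intros; apply Rabs_pos).
  exists (sumL nrm rs); split; [apply sumL_nonneg, Hnrm |].
  intros r Hr i; apply (Rle_trans _ (nrm r)); [| apply sumL_term; assumption].
  apply (sumI_term n (fun l => Rabs (r (zerov n) l))); intros; apply Rabs_pos.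
Qed.

Lemma pow_dominates_power_of_affine (a m u v : R) (K : nat) :
  1 <= a -> 0 <= u -> 0 <= v -> 2 * a ^ K < m -> exists j, (u * a ^ j + v) ^ K < m ^ j.
Proof.
  intros Ha Hu Hv Hm; destruct (INR_unbounded ((u + v) ^ K)) as [j Hj]; exists j.
  assert (Haj : 1 <= a ^ j) by (apply pow_R1_Rle; lra).
  assert (HaK : 0 < a ^ K) by (apply pow_lt; lra).
  assert (HajK : 0 < a ^ (j * K)) by (apply pow_lt; lra).
  assert (Hj2 : INR j < 2 ^ j).
  { clear; induction j; [simpl; lra |].
    rewrite S_INR; simpl pow; assert (1 <= 2 ^ j) by (apply pow_R1_Rle; lra); lra. }
  assert (Hle : (u * a ^ j + v) ^ K <= a ^ (j * K) * (u + v) ^ K).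
  { rewrite pow_mult, <- Rpow_mult_distr; apply pow_incr; split; nra. }
  assert (Hge : (2 * a ^ K) ^ j <= m ^ j) by (apply pow_incr; lra).
  rewrite Rpow_mult_distr, <- pow_mult, Nat.mul_comm in Hge.
  assert (a ^ (j * K) * (u + v) ^ K < a ^ (j * K) * 2 ^ j) by (apply Rmult_lt_compat_l; lra).
  lra.
Qed.

Section Growth.

Variables (n : nat) (G : (vec n -> vec n) -> Prop) (phi : (vec n -> vec n) -> vec n -> vec n).
Variable c0 : R.

Hypothesis G_subgroup : subgroup_E n G.
Hypothesis phi_G : forall g, G g -> G (phi g).
Hypothesis phi_inj : forall g g', phi g = phi g' -> g = g'.
Hypothesis phi_comp : forall g g' x, phi g (phi g' x) = phi (fun y => g (g' y)) x.
Hypothesis phi_id : forall x, phi (fun y => y) x = x.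
Hypothesis c0_ge0 : 0 <= c0.
Hypothesis phi_transl : forall g Rb, G g -> (forall i, Rabs (g (zerov n) i) <= Rb) ->
  forall i, Rabs (phi g (zerov n) i) <= c0 * Rb.

Definition phi_image (h : vec n -> vec n) : Prop := exists g, G g /\ h = phi g.

Fixpoint words (rs : list (vec n -> vec n)) (j : nat) : list (vec n -> vec n) :=
  match j with
  | O => (fun x => x) :: nil
  | S j' => flat_map (fun r => map (fun g x => r (phi g x)) (words rs j')) rs
  end.

Lemma words_length rs j : length (words rs j) = (length rs ^ j)%nat.
Proof.
  induction j; simpl; [reflexivity |].
  rewrite (flat_map_constant_length (c := (length rs ^ j)%nat)); [lia |].
  intros r _; rewrite length_map; assumption.
Qed.

Lemma words_in_group rs j : (forall r, In r rs -> G r) -> forall g, In g (words rs j) -> G g.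
Proof.
  destruct G_subgroup as [_ [Hid [Hmul _]]]; intros HrsG.
  induction j; simpl; [intros g [<- | []]; assumption |].
  intros f Hf; apply in_flat_map in Hf as [r [Hr Hf]]; apply in_map_iff in Hf as [g [<- Hg]].
  apply Hmul; [apply HrsG | apply phi_G, IHj]; assumption.
Qed.

Lemma words_transl_bound rs C j :
  (forall r, In r rs -> G r) -> 0 <= C -> (forall r, In r rs -> forall i, Rabs (r (zerov n) i) <= C) ->
  forall g, In g (words rs j) -> forall i, Rabs (g (zerov n) i) <= (INR n * c0 + 1) ^ j * (C + 1).
Proof.
  intros HrsG HC HrsC; pose proof (pos_INR n) as Hn.
  set (a := INR n * c0 + 1); assert (Ha : 1 <= a) by (unfold a; nra).
  induction j; simpl words.
  - intros g [<- | []] i; unfold zerov; rewrite Rabs_R0; simpl; lra.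
  - intros f Hf i; apply in_flat_map in Hf as [r [Hr Hf]]; apply in_map_iff in Hf as [g [<- Hg]].
    assert (Haj : 1 <= a ^ j) by (apply pow_R1_Rle; lra).
    assert (Hphig : forall l, Rabs (phi g (zerov n) l) <= c0 * (a ^ j * (C + 1)))
      by (apply phi_transl, IHj; [apply (words_in_group rs j) |]; assumption).
    assert (Hstep : Rabs (r (phi g (zerov n)) i - r (zerov n) i) <= INR n * (c0 * (a ^ j * (C + 1)))).
    { eapply Rle_trans; [apply isometry_coord_lipschitz, (proj1 G_subgroup), HrsG, Hr |].
      apply sumI_le_const; intros l; unfold zerov at 2; rewrite Rminus_0_r; apply Hphig. }
    pose proof (HrsC r Hr i).
    replace (r (phi g (zerov n)) i) with ((r (phi g (zerov n)) i - r (zerov n) i) + r (zerov n) i) by ring.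
    assert (C + 1 <= a ^ j * (C + 1)) by nra.
    eapply Rle_trans; [apply Rabs_triang |]; simpl pow; unfold a at 1; nra.
Qed.

(* Words starting with different letters lie in different cosets [r phi(G)]
   and words with the same first letter differ after it, by injectivity. *)
Lemma NoDup_words_step L rs :
  NoDup L -> (forall g, In g L -> G g) -> distinct_cosets phi_image rs -> (forall r, In r rs -> G r) ->
  NoDup (flat_map (fun r => map (fun g x => r (phi g x)) L) rs).
Proof.
  destruct G_subgroup as [_ [_ [Hmul Hinv]]]; intros HL HLG.
  induction rs as [| r rs IH]; simpl; [intros; constructor |]; intros [Hr Hrs] HrsG.
  apply NoDup_app; [| apply IH; [| intros; apply HrsG; right]; assumption |].
  - apply NoDup_map_NoDup_ForallPairs; [| assumption]; intros g g' _ _ E.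
    apply phi_inj, functional_extensionality; intros x.
    destruct (Hinv r (HrsG r (or_introl eq_refl))) as [ri [_ [Hri _]]].
    rewrite <- (Hri (phi g x)), <- (Hri (phi g' x)); exact (f_equal ri (equal_f E x)).
  - intros f Hf1 Hf2; apply in_map_iff in Hf1 as [g [Eg Hg]].
    apply in_flat_map in Hf2 as [s [Hs Hf2]]; apply in_map_iff in Hf2 as [g' [Eg' Hg']].
    apply (Hr s Hs).
    destruct (Hinv g (HLG g Hg)) as [gi [Hgi [Hgig Hggi]]].
    exists (phi (fun y => g' (gi y))); split.
    { exists (fun y => g' (gi y)); split; [apply Hmul; [apply HLG |] |]; auto. }
    apply functional_extensionality; intros x.
    rewrite <- phi_comp.
    change (s (phi g' (phi gi x))) with ((fun x => s (phi g' x)) (phi gi x)).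
    rewrite Eg', <- Eg, phi_comp.
    replace (fun y => g (gi y)) with (fun y : vec n => y)
      by (apply functional_extensionality; intros; rewrite Hggi; reflexivity).
    rewrite phi_id; reflexivity.
Qed.

Lemma NoDup_words rs j :
  distinct_cosets phi_image rs -> (forall r, In r rs -> G r) -> NoDup (words rs j).
Proof.
  intros Hrs HrsG; induction j; simpl.
  - constructor; [simpl; tauto | constructor].
  - apply NoDup_words_step; [| apply (words_in_group rs j) | |]; assumption.
Qed.

Hypothesis G_discrete : discrete n G.

Lemma distinct_cosets_length_bound : exists M, forall rs,
  distinct_cosets phi_image rs -> (forall r, In r rs -> G r) -> (length rs < M)%nat.
Proof.
  destruct (discrete_coord_separated n G G_subgroup G_discrete) as [d [Hd Hsep]].
  pose proof (pos_INR n) as Hn.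
  set (K := length (coord_fns n)); set (a := INR n * c0 + 1).
  assert (Ha : 1 <= a) by (unfold a; nra).
  destruct (INR_unbounded (2 * a ^ K)) as [M HM]; exists M.
  intros rs Hrs HrsG; apply Nat.nle_gt; intros HMle.
  destruct (list_transl_bound n rs) as [C [HC HrsC]].
  destruct (pow_dominates_power_of_affine a (INR (length rs)) (2 * (C + 1) / d) (2 * INR n / d + 3) K)
    as [j Hj]; [assumption | unfold Rdiv; apply Rmult_le_pos; [lra | left; apply Rinv_0_lt_compat, Hd] |
                unfold Rdiv; pose proof (Rinv_0_lt_compat d Hd); nra |
                pose proof (le_INR _ _ HMle); lra |].
  assert (Haj : 1 <= a ^ j) by (apply pow_R1_Rle; lra).
  assert (Hcount := separated_list_length_le (coord_fns n) d (a ^ j * (C + 1) + INR n) (words rs j)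
                      Hd ltac:(nra) (NoDup_words rs j Hrs HrsG)).
  rewrite words_length, pow_INR in Hcount.
  replace (2 * (a ^ j * (C + 1) + INR n) / d + 3) with (2 * (C + 1) / d * a ^ j + (2 * INR n / d + 3))
    in Hcount by (field; lra).
  apply (Rlt_not_le _ _ Hj), Hcount.
  - intros g c Hg Hc; eapply coord_fns_bound; [| | exact Hc].
    + apply (proj1 G_subgroup), (words_in_group rs j HrsG g Hg).
    + apply (words_transl_bound rs C j); assumption.
  - intros g h Hg Hh; apply Hsep; apply (words_in_group rs j HrsG); assumption.
Qed.

End Growth.

Definition conj_by {n} (A Ainv g : vec n -> vec n) : vec n -> vec n := fun x => A (g (Ainv x)).

Lemma subgroup_E_idempotent n G f :
  subgroup_E n G -> G f -> (forall x, f (f x) = f x) -> forall x, f x = x.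
Proof.
  intros [_ [_ [_ Hinv]]] Hf Hidem x.
  destruct (Hinv f Hf) as [g [_ [Hgf _]]].
  rewrite <- (Hgf (f x)), Hidem; apply Hgf.
Qed.

Section Conjugation.

Variables (n : nat) (A Ainv : vec n -> vec n).
Hypothesis Ainv_A : forall x, Ainv (A x) = x.

Lemma conj_by_comp g g' x :
  conj_by A Ainv g (conj_by A Ainv g' x) = conj_by A Ainv (fun y => g (g' y)) x.
Proof. unfold conj_by; rewrite Ainv_A; reflexivity. Qed.

Lemma conj_by_inj g g' : conj_by A Ainv g = conj_by A Ainv g' -> g = g'.
Proof.
  intros E; apply functional_extensionality; intros y.
  rewrite <- (Ainv_A (g y)), <- (Ainv_A (g' y)), <- (Ainv_A y).
  exact (f_equal Ainv (equal_f E (A y))).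
Qed.

Hypothesis A_Ainv : forall x, A (Ainv x) = x.

Lemma conj_set_subgroup_E G : subgroup_E n G -> (forall h, conj_set n A Ainv G h -> G h) ->
  subgroup_E n (conj_set n A Ainv G).
Proof.
  intros [Hiso [Hid [Hmul Hinv]]] Hsub; split; [| split; [| split]].
  - intros f Hf; apply Hiso, Hsub, Hf.
  - exists (fun y => y); split; [assumption |].
    apply functional_extensionality; intros; symmetry; apply A_Ainv.
  - intros f f' [g [Hg ->]] [g' [Hg' ->]]; exists (fun y => g (g' y)); split; [auto |].
    apply functional_extensionality; intros; apply conj_by_comp.
  - intros f [g [Hg ->]]; destruct (Hinv g Hg) as [gi [Hgi [Hgig Hggi]]].
    exists (conj_by A Ainv gi); split; [exists gi; auto |].
    split; intros x; unfold conj_by; rewrite Ainv_A; [rewrite Hgig | rewrite Hggi]; apply A_Ainv.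
Qed.

End Conjugation.

Lemma simil_inv_simil n lam A' x :
  orthogonal n A' -> 0 < lam -> simil_inv n lam A' (simil n lam A' x) = x.
Proof.
  intros HA Hlam; apply functional_extensionality; intros i; unfold simil_inv, simil.
  unfold mv at 1.
  rewrite (sumI_ext _ _ (fun k => lam * (transpose n A' i k * mv n A' x k))) by (intros; ring).
  rewrite sumI_scal; fold (mv n (transpose n A') (mv n A' x) i).
  rewrite mv_transpose_orthogonal by assumption; field; lra.
Qed.

Lemma simil_inv_zerov n lam A' : simil_inv n lam A' (zerov n) = zerov n.
Proof.
  apply functional_extensionality; intros i; unfold simil_inv.
  rewrite mv_zerov; unfold zerov; ring.
Qed.

Lemma conj_simil_transl n lam A' g Rb i :
  orthogonal n A' -> 0 < lam -> (forall k, Rabs (g (zerov n) k) <= Rb) ->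
  Rabs (conj_by (simil n lam A') (simil_inv n lam A') g (zerov n) i) <= lam * INR n * Rb.
Proof.
  intros HA Hlam Hg; unfold conj_by; rewrite simil_inv_zerov; unfold simil.
  rewrite Rabs_mult, (Rabs_pos_eq lam), Rmult_assoc by lra.
  apply Rmult_le_compat_l; [lra | apply orthogonal_mv_bound; assumption].
Qed.

Theorem mainTheorem13 (n : nat) (Gamma : (vec n -> vec n) -> Prop)
  (lam : R) (A' : mat n) :
  subgroup_E n Gamma ->
  discrete n Gamma ->
  orthogonal n A' ->
  0 < lam ->
  (forall h, conj_set n (simil n lam A') (simil_inv n lam A') Gamma h -> Gamma h) ->
  subgroup_of n (conj_set n (simil n lam A') (simil_inv n lam A') Gamma) Gamma /\
  finite_index n (conj_set n (simil n lam A') (simil_inv n lam A') Gamma) Gamma.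
Proof.
  intros HG HD HA Hlam Hsub.
  set (A := simil n lam A') in *; set (Ainv := simil_inv n lam A') in *.
  assert (Ainv_A : forall x, Ainv (A x) = x) by (intros; apply simil_inv_simil; assumption).
  (* [A Ainv = id] does not follow from [A'^T A' = I] without linear algebra,
     but [A Ainv] is an idempotent element of [Gamma]. *)
  assert (A_Ainv : forall x, A (Ainv x) = x).
  { apply (subgroup_E_idempotent n Gamma (conj_by A Ainv (fun y => y))); [assumption | |].
    - apply Hsub; exists (fun y => y); split; [apply HG | reflexivity].
    - intros x; unfold conj_by; rewrite Ainv_A; reflexivity. }
  split; [split; [apply conj_set_subgroup_E | ]; assumption |].
  apply finite_index_of_distinct_cosets_bounded.
  apply (distinct_cosets_length_bound n Gamma (conj_by A Ainv) (lam * INR n));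
    [assumption | | apply conj_by_inj, Ainv_A | apply conj_by_comp, Ainv_A | exact A_Ainv | | | assumption].
  - intros g Hg; apply Hsub; exists g; split; [assumption | reflexivity].
  - pose proof (pos_INR n); nra.
  - intros g Rb _ Hg i; apply conj_simil_transl; assumption.
Qed.
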